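(* Let $f_{SH}(x)=\sqrt{\frac{x^2+1}{2}}-\frac{2x}{x+1}$ for $x\in(0,\infty)$, let $f_{SH}^*(u)=u\,f_{SH}\!\left(\frac{1-u}{u}\right)$ for $u\in(0,1)$, extended by continuity to $[0,1]$ (explicitly $f_{SH}^*(u)=\frac{\sqrt2}{2}\sqrt{u^2+(1-u)^2}-2u(1-u)$), and define $\overline M_{SH}(C_1,C_2)=E_X\{f_{SH}^*(P(C_2\mid x))\}$. Then $$P_e\le \frac12\left[1-\frac{2}{\sqrt2}\,\overline M_{SH}(C_1,C_2)\right].$$
   Context: Two-class decision problem: classes $C_1,C_2$, an observation $x$ in a space $\mathrm X$ with density $p(x)$, and a posteriori probabilities $P(C_1\mid x),P(C_2\mid x)\ge0$ with $P(C_1\mid x)+P(C_2\mid x)=1$. $E_X\{g(x)\}=\int_{\mathrm X} g(x)p(x)\,dx$. $P_e=E_X\{\min(P(C_1\mid x),P(C_2\mid x))\}$ is the Bayesian probability of error. *)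

From HB Require Import structures.
From mathcomp Require Import all_boot all_order all_algebra.
From mathcomp Require Import all_classical all_reals all_analysis.
Set Implicit Arguments. Unset Strict Implicit. Unset Printing Implicit Defensive.
Import Order.TTheory GRing.Theory Num.Theory.
Local Open Scope ring_scope.

Definition fSH {R : realType} (x : R) : R :=
  Num.sqrt ((x ^+ 2 + 1) / 2) - (2 * x) / (x + 1).

Definition fSHstar {R : realType} (u : R) : R :=
  if (0 < u) && (u < 1) then u * fSH ((1 - u) / u)
  else Num.sqrt 2 / 2 * Num.sqrt (u ^+ 2 + (1 - u) ^+ 2) - 2 * u * (1 - u).

(** On [[0, 1]], [fSHstar u = sqrt2/2 * sqrt (u^2 + (1-u)^2) - 2u(1-u)], which is
symmetric under [u |-> 1 - u].  For [m = min (u, 1-u)], [t = 1 - 2m] and [a = m(1-m)],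
the pointwise bound [m <= 1/2 (1 - sqrt2 fSHstar u)] amounts to
[sqrt (1 - 2a) <= t + 2 sqrt2 a]; squaring leaves [0 <= 2at (2 sqrt2 - t)], true as
[0 <= t <= 1].  Integrating this bound against the density [p], whose integral is [1],
gives the theorem. *)

From HB Require Import structures.
From mathcomp Require Import all_boot all_order all_algebra.
From mathcomp Require Import all_classical all_reals all_analysis.
From mathcomp Require Import ring lra.
From mathcomp Require Import measurable_realfun.
Import Order.TTheory GRing.Theory Num.Theory.
Local Open Scope ring_scope.

Definition fSHstar_closed {R : realType} (u : R) : R :=
  Num.sqrt 2 / 2 * Num.sqrt (u ^+ 2 + (1 - u) ^+ 2) - 2 * u * (1 - u).

Section pointwise_bound.
Variable R : realType.
Implicit Types u m : R.

Lemma fSHstarE u : 0 <= u <= 1 -> fSHstar u = fSHstar_closed u.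
Proof.
move=> /andP[u0 u1]; rewrite /fSHstar /fSHstar_closed.
case: ifP => // /andP[u_gt0 u_lt1].
have u_neq0 : u != 0 by rewrite gt_eqF.
rewrite /fSH mulrBr.
have -> : (1 - u) / u + 1 = u^-1 by field.
have -> : u * (2 * ((1 - u) / u) / u^-1) = 2 * u * (1 - u) by field.
congr (_ - _).
have lhs_ge0 : 0 <= u * Num.sqrt ((((1 - u) / u) ^+ 2 + 1) / 2).
  by rewrite mulr_ge0 ?sqrtr_ge0.
have rhs_ge0 : 0 <= Num.sqrt 2 / 2 * Num.sqrt (u ^+ 2 + (1 - u) ^+ 2).
  by rewrite !mulr_ge0 ?sqrtr_ge0 //; lra.
apply/eqP; rewrite -(@eqrXn2 _ 2) // !exprMn !sqr_sqrtr ?addr_ge0 ?sqr_ge0 //.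
- by apply/eqP; field.
- by rewrite divr_ge0 // addr_ge0 // mulr_ge0 ?sqr_ge0.
Qed.

Lemma fSHstar_closedC u : fSHstar_closed (1 - u) = fSHstar_closed u.
Proof.
rewrite /fSHstar_closed (_ : 1 - (1 - u) = u) ?subKr //.
by rewrite [(1 - u) ^+ 2 + _]addrC [2 * _ * u]mulrAC.
Qed.

Lemma sqrt2_gt1 : 1 < Num.sqrt (2 : R).
Proof. by rewrite -[X in X < _]sqrtr1 ltr_sqrt ?ltr1n. Qed.

Lemma two_div_sqrt2 : 2 / Num.sqrt 2 = Num.sqrt (2 : R).
Proof.
have s2_neq0 : Num.sqrt (2 : R) != 0 by rewrite gt_eqF ?sqrtr_gt0.
by apply: (mulIf s2_neq0); rewrite divfK // -expr2 sqr_sqrtr.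
Qed.

Lemma sqrt_sqr_add_sqr_le m : 0 <= m <= 1 / 2 ->
  Num.sqrt (m ^+ 2 + (1 - m) ^+ 2) <= 1 - 2 * m + 2 * Num.sqrt 2 * (m * (1 - m)).
Proof.
move=> /andP[m0 m_le_half].
set r := Num.sqrt (2 : R); set a := m * (1 - m); set t := 1 - 2 * m.
have r2 : r ^+ 2 = 2 by rewrite sqr_sqrtr.
have r_gt1 : 1 < r := sqrt2_gt1.
have a0 : 0 <= a by rewrite mulr_ge0 ?subr_ge0 //; lra.
have t0 : 0 <= t by rewrite subr_ge0; lra.
have rhs_ge0 : 0 <= t + 2 * r * a by rewrite addr_ge0 // !mulr_ge0 //; lra.
rewrite -(ger0_norm rhs_ge0) -sqrtr_sqr ler_sqrt ?sqr_ge0 //.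
have -> : m ^+ 2 + (1 - m) ^+ 2 = 1 - 2 * a by rewrite /a; ring.
have -> : (t + 2 * r * a) ^+ 2 = 1 - 2 * a + 2 * a * t * (2 * r - t).
  by rewrite /t /a; ring: r2.
by rewrite lerDl !mulr_ge0 // subr_ge0 /t; lra.
Qed.

Lemma fSHstar_closed_bounded u : 0 <= u <= 1 -> `|fSHstar_closed u| <= 1.
Proof.
move=> /andP[u0 u1]; rewrite /fSHstar_closed.
set r := Num.sqrt (2 : R); set s := Num.sqrt _.
have r2 : r ^+ 2 = 2 by rewrite sqr_sqrtr.
have r0 : 0 <= r := sqrtr_ge0 2.
have s0 : 0 <= s := sqrtr_ge0 _.
have s2 : s ^+ 2 = u ^+ 2 + (1 - u) ^+ 2 by rewrite sqr_sqrtr ?addr_ge0 ?sqr_ge0.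
have s_le1 : s <= 1 by nra.
have r_le2 : r <= 2 by nra.
rewrite ler_norml; apply/andP; split; nra.
Qed.

Lemma min_le_fSHstar_closed u : 0 <= u <= 1 ->
  Num.min (1 - u) u <= 1 / 2 * (1 - 2 / Num.sqrt 2 * fSHstar_closed u).
Proof.
suff half_case (v : R) : 0 <= v <= 1 / 2 ->
    v <= 1 / 2 * (1 - 2 / Num.sqrt 2 * fSHstar_closed v).
  move=> /andP[u0 u1]; have [u_le_half|u_gt_half] := leP u (1 / 2).
    by rewrite (min_idPr _) ?half_case //; lra.
  rewrite (min_idPl _); last lra.
  by rewrite -fSHstar_closedC half_case //; lra.
move=> v_range; have := sqrt_sqr_add_sqr_le _ v_range.
rewrite two_div_sqrt2 /fSHstar_closed.
set r := Num.sqrt (2 : R); set s := Num.sqrt _.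
have r2 : r ^+ 2 = 2 by rewrite sqr_sqrtr.
have -> : 1 / 2 * (1 - r * (r / 2 * s - 2 * v * (1 - v))) =
          1 / 2 - s / 2 + r * (v * (1 - v)) by field: r2.
lra.
Qed.

End pointwise_bound.

Lemma measurable_fSHstar_closed (R : realType) : measurable_fun setT (@fSHstar_closed R).
Proof.
apply: measurable_funB; last first.
  by apply: measurable_funM; [exact: measurable_funM|exact: measurable_funB].
apply: measurable_funM => //.
apply: measurableT_comp; first exact: continuous_measurable_fun (@sqrt_continuous R).
by apply: measurable_funD; apply: measurable_funX => //; exact: measurable_funB.
Qed.

Section density_integral.
Context {d} {X : measurableType d} {R : realType} {mu : {measure set X -> \bar R}}.
Context {p : X -> R}.
Hypotheses (mp : measurable_fun setT p) (p_ge0 : forall x, 0 <= p x).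
Hypothesis p_int : (\int[mu]_x (p x)%:E = 1)%E.

Lemma density_integrable : mu.-integrable setT (EFin \o p).
Proof.
apply/integrableP; split; first exact/measurable_EFinP.
under eq_integral do rewrite /= ger0_norm //.
by rewrite p_int ltry.
Qed.

Lemma bounded_mul_density_integrable (g : X -> R) (c : R) :
  measurable_fun setT g -> (forall x, `|g x| <= c) ->
  mu.-integrable setT (EFin \o (fun x => g x * p x)).
Proof.
move=> mg g_le_c.
have cp_int : mu.-integrable setT (EFin \o (fun x => c * p x)).
  by rewrite /comp; under eq_fun do rewrite EFinM; exact: integrableZl density_integrable.
apply: le_integrable cp_int => //; first exact/measurable_EFinP/measurable_funM.
move=> x _; rewrite lee_fin !normrM (ger0_norm (p_ge0 x)) ler_wpM2r //.
exact: le_trans (g_le_c x) (ler_norm c).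
Qed.

Lemma integral_density_le_affine (f g : X -> R) (a b c : R) :
  measurable_fun setT f -> measurable_fun setT g -> (forall x, `|g x| <= c) ->
  (forall x, 0 <= f x) -> (forall x, f x <= a * (1 - b * g x)) ->
  (\int[mu]_x (f x * p x)%:E <=
   a%:E * (1 - b%:E * \int[mu]_x (g x * p x)%:E))%E.
Proof.
move=> mf mg g_le_c f_ge0 f_le.
have p_integrable := density_integrable.
have gp_int := bounded_mul_density_integrable _ _ mg g_le_c.
have [J J_def] : exists J : R, (\int[mu]_x (g x * p x)%:E = J%:E)%E.
  by exists (fine (\int[mu]_x (g x * p x)%:E)); rewrite fineK // integrable_fin_num.
apply: (@le_trans _ _ (\int[mu]_x ((a * p x)%:E - (a * b * (g x * p x))%:E))%E).
  apply: ge0_le_integral => //.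
  - by move=> x _; rewrite lee_fin mulr_ge0.
  - exact/measurable_EFinP/measurable_funM.
  - by apply: emeasurable_funB; apply/measurable_EFinP;
      [exact: measurable_funM|apply: measurable_funM => //; exact: measurable_funM].
  - move=> x _; rewrite -EFinB lee_fin.
    rewrite (_ : a * p x - a * b * (g x * p x) = a * (1 - b * g x) * p x); last by ring.
    exact: ler_wpM2r.
rewrite integralB_EFin //; first last.
- by rewrite /comp; under eq_fun do rewrite EFinM; exact: integrableZl gp_int.
- by rewrite /comp; under eq_fun do rewrite EFinM; exact: integrableZl p_integrable.
under eq_integral do rewrite EFinM.
rewrite integralZl // p_int mule1.
under eq_integral do rewrite EFinM.
rewrite integralZl // J_def.
change ((a - a * b * J)%:E <= (a * (1 - b * J))%:E)%E.
by rewrite lee_fin mulrBr mulr1 mulrA.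
Qed.
End density_integral.

Local Open Scope ereal_scope.

Theorem mainTheorem6 (d : measure_display) (X : measurableType d) (R : realType)
  (mu : {measure set X -> \bar R}) (p P1 P2 : X -> R)
  (mp : measurable_fun setT p) (p_ge0 : forall x, (0 <= p x)%R)
  (p_int : \int[mu]_x (p x)%:E = 1)
  (mP1 : measurable_fun setT P1) (mP2 : measurable_fun setT P2)
  (P1_ge0 : forall x, (0 <= P1 x)%R) (P2_ge0 : forall x, (0 <= P2 x)%R)
  (P12 : forall x, (P1 x + P2 x = 1)%R) :
  \int[mu]_x (Num.min (P1 x) (P2 x) * p x)%:E
  <= (1 / 2)%:E *
     (1 - (2 / Num.sqrt 2)%:E * \int[mu]_x (fSHstar (P2 x) * p x)%:E).
Proof.
have P2_01 x : (0 <= P2 x <= 1)%R by rewrite P2_ge0 -(P12 x) lerDr P1_ge0.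
have P1E x : P1 x = (1 - P2 x)%R by rewrite -(P12 x) addrK.
under eq_integral do rewrite P1E.
have -> : \int[mu]_x (fSHstar (P2 x) * p x)%:E =
          \int[mu]_x (fSHstar_closed (P2 x) * p x)%:E.
  by apply: eq_integral => x _; rewrite fSHstarE.
apply: (integral_density_le_affine mp p_ge0 p_int).
- by apply: measurable_minr => //; exact: measurable_funB.
- exact: measurableT_comp (@measurable_fSHstar_closed R) mP2.
- by move=> x; exact: fSHstar_closed_bounded.
- by move=> x; rewrite le_min -(P12 x) addrK P1_ge0 P2_ge0.
- by move=> x; rewrite min_le_fSHstar_closed.
Qed.
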